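(* For every $n$-qubit pure state $\ket\psi=\sum_{x\in\mathbb F_2^n}c_x\ket x$, $$32^n\sum_{x\in\mathbb F_2^{2n}}\widehat{p_\psi}(x)^3\ \ge\ |c_{0}|^{12},$$ where $c_0$ is the amplitude of $\ket{0^n}$.
   Context: For $x=(a,b)\in\mathbb F_2^{2n}$ with $a,b\in\mathbb F_2^n$, the Weyl operator is $W_x=i^{a\cdot b}X^{a_1}Z^{b_1}\otimes\cdots\otimes X^{a_n}Z^{b_n}$, where $a\cdot b=\sum_j a_jb_j\in\mathbb Z$. The characteristic distribution is $p_\psi(x)=2^{-n}|\braket{\psi|W_x|\psi}|^2$. For $f:\mathbb F_2^{2n}\to\mathbb R$ the Fourier coefficients are $\widehat f(x)=4^{-n}\sum_{y\in\mathbb F_2^{2n}}f(y)(-1)^{x\cdot y}$ (dot product mod 2). *)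

From mathcomp Require Import all_boot all_order all_algebra.
Set Implicit Arguments. Unset Strict Implicit. Unset Printing Implicit Defensive.
Import Order.TTheory GRing.Theory Num.Theory.
Local Open Scope ring_scope.

Definition bits (n : nat) := {ffun 'I_n -> 'I_2}.

(* Integer dot product a . b = sum_j a_j b_j (a natural number, not mod 2). *)
Definition dotn (n : nat) (a b : bits n) : nat := (\sum_(j < n) (a j : nat) * b j)%N.

Definition bits2 (n : nat) := (bits n * bits n)%type.

(* Standard (non-symplectic) dot product mod 2 on F_2^{2n}, returned as a parity bool. *)
Definition dot2 (n : nat) (x y : bits2 n) : bool :=
  odd (dotn x.1 y.1 + dotn x.2 y.2).

Section Qubits.
Variable C : numClosedFieldType.

Definition PauliX : 'M[C]_2 := \matrix_(i, j) (i != j)%:R.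
Definition PauliZ : 'M[C]_2 := \matrix_(i, j) ((i == j)%:R * (-1) ^+ (i : nat)).

(* Weyl operator W_(a,b) = i^{a.b} X^{a_1}Z^{b_1} (x) ... (x) X^{a_n}Z^{b_n},
   as a matrix indexed by computational basis states (tensor product entries
   are products of the factors' entries). *)
Definition weyl (n : nat) (x : bits2 n) (z y : bits n) : C :=
  'i ^+ (dotn x.1 x.2) *
  \prod_(j < n) ((PauliX ^+ (x.1 j : nat)) * (PauliZ ^+ (x.2 j : nat))) (z j) (y j).

Definition expect (n : nat) (psi : bits n -> C) (M : bits n -> bits n -> C) : C :=
  \sum_(z : bits n) \sum_(y : bits n) (psi z)^* * M z y * psi y.

Definition charDist (n : nat) (psi : bits n -> C) (x : bits2 n) : C :=
  (2 ^+ n)^-1 * `|expect psi (weyl x)| ^+ 2.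

Definition fourier (n : nat) (f : bits2 n -> C) (x : bits2 n) : C :=
  (4 ^+ n)^-1 * \sum_(y : bits2 n) f y * (-1) ^+ dot2 x y.

Definition is_state (n : nat) (psi : bits n -> C) : Prop :=
  \sum_(x : bits n) `|psi x| ^+ 2 = 1.

Definition zero_bits (n : nat) : bits n := [ffun=> ord0].

End Qubits.

From HB Require Import structures.
From mathcomp Require Import all_boot all_order all_algebra ring.
Import Order.TTheory GRing.Theory Num.Theory.
Local Open Scope ring_scope.
Set Implicit Arguments. Unset Strict Implicit. Unset Printing Implicit Defensive.

(* For a state with amplitudes c and p = p_psi, expanding the cube of the Fourier
   transform over characters gives
     \sum_x p^(x)^3 = 16^-n \sum_(y1, y2) p(y1) p(y2) p(y1 + y2).
   All terms are nonnegative, so we may keep only y1, y2 of the form (0, b), i.e.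
   the diagonal Weyl operators Z^b.  There p(0, b) = 2^-n q^(b)^2 with q = |c|^2,
   whose Walsh transform is the autocorrelation r(x) = \sum_z q(z) q(z + x); the
   same cube expansion turns the restricted sum into 2^-n \sum_x r(x)^3, which is
   at least 2^-n r(0)^3 >= 2^-n q(0)^6 = 2^-n |c_0|^12. *)

(* The finite and the additive structure of F_2^n and F_2^2n only combine into a
   finZmodType once both are declared on the aliases themselves. *)
HB.instance Definition _ n := GRing.Zmodule.on (bits n).
HB.instance Definition _ n := Finite.on (bits n).
HB.instance Definition _ n := GRing.Zmodule.on (bits2 n).
HB.instance Definition _ n := Finite.on (bits2 n).

Section CharacterTransform.
Variables (R : comPzRingType) (G : finZmodType) (chi : G -> G -> R) (N : R).
Hypothesis chiD : forall x y z, chi x (y + z) = chi x y * chi x z.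
Hypothesis sum_chi : forall y, \sum_x chi x y = N * (y == 0)%:R.

Definition transform (h : G -> R) (x : G) : R := \sum_y h y * chi x y.

Lemma sum_transformM (h g : G -> R) (w : G) :
  \sum_x transform h x * transform g x * chi x w = N * \sum_y h y * g (- (y + w)).
Proof.
transitivity (\sum_x \sum_y1 \sum_y2 h y1 * g y2 * chi x (y2 + (y1 + w))).
  apply: eq_bigr => x _; rewrite /transform !mulr_suml; apply: eq_bigr => y1 _.
  rewrite mulr_sumr mulr_suml; apply: eq_bigr => y2 _.
  by rewrite !chiD; ring.
rewrite exchange_big mulr_sumr; apply: eq_bigr => y1 _.
rewrite exchange_big /=.
under eq_bigr => y2 _ do rewrite -mulr_sumr sum_chi mulrA addr_eq0 mulr_natr mulrb.
by rewrite -big_mkcond big_pred1_eq; ring.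
Qed.

Lemma sum_transform_cube (h : G -> R) :
  \sum_x transform h x ^+ 3 = N * \sum_y1 \sum_y2 h y1 * h y2 * h (- (y1 + y2)).
Proof.
transitivity (\sum_x \sum_w h w * (transform h x * transform h x * chi x w)).
  apply: eq_bigr => x _.
  rewrite exprSr expr2 {3}/transform mulr_sumr; apply: eq_bigr => w _; ring.
rewrite exchange_big.
under eq_bigr => w _ do rewrite -mulr_sumr sum_transformM mulrCA mulr_sumr.
rewrite -mulr_sumr; congr (_ * _); apply: eq_bigr => w _.
by apply: eq_bigr => y _; rewrite addrC; ring.
Qed.

End CharacterTransform.

Lemma ffun_neq0 (aT : finType) (rT : nmodType) (f : {ffun aT -> rT}) :
  f != 0 -> exists j, f j != 0.
Proof.
move=> nz_f; apply/existsP; rewrite -negb_forall; apply: contra nz_f => /forallP f0.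
by apply/eqP/ffunP => j; rewrite ffunE; apply/eqP/f0.
Qed.

Lemma opp_bits n (a : bits n) : - a = a.
Proof. by apply/ffunP => j; rewrite ffunE; case: (a j) => [[|[|u]] ?] //; apply/val_inj. Qed.

Lemma opp_bits2 n (x : bits2 n) : - x = x.
Proof. by case: x => a b; rewrite (_ : - (a, b) = (- a, - b)) // !opp_bits. Qed.

Section Walsh.
Variable R : comPzRingType.

Definition walsh n (a w : bits n) : R := (-1) ^+ dotn a w.

Definition walsh2 n (x y : bits2 n) : R := (-1) ^+ dot2 x y.

Lemma walshE n (a w : bits n) : walsh a w = \prod_(j < n) (-1) ^+ (a j * w j)%N.
Proof. by rewrite /walsh /dotn (big_morph _ (@exprD _ _) (expr0 _)). Qed.

Lemma walshC n (a w : bits n) : walsh a w = walsh w a.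
Proof. by rewrite !walshE; apply: eq_bigr => j _; rewrite mulnC. Qed.

Lemma sign_mul_bitD (k u v : 'I_2) :
  (-1 : R) ^+ (k * (u + v)%R)%N = (-1) ^+ (k * u)%N * (-1) ^+ (k * v)%N.
Proof.
by case: k => [[|[|k]] ?] //=; case: u => [[|[|u]] ?] //=; case: v => [[|[|v]] ?] //=;
  rewrite ?mul0n ?mul1n ?expr0 ?expr1 ?mulr1 ?mul1r ?mulrNN ?mulr1.
Qed.

Lemma walshD n (a w1 w2 : bits n) : walsh a (w1 + w2) = walsh a w1 * walsh a w2.
Proof.
by rewrite !walshE -big_split; apply: eq_bigr => j _; rewrite ffunE sign_mul_bitD.
Qed.

Lemma sum_sign_mul_bit (v : 'I_2) : \sum_(u < 2) (-1 : R) ^+ (u * v)%N = 2 * (v == 0)%:R.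
Proof.
rewrite big_ord_recr big_ord1 /=.
by case: v => [[|[|v]] ?] //=; rewrite ?expr0 ?expr1 ?mulr1 ?mulr0 // addrN.
Qed.

Lemma sum_walsh n (w : bits n) : \sum_a walsh a w = 2 ^+ n * (w == 0)%:R.
Proof.
under eq_bigr => a _ do rewrite walshE.
rewrite -(bigA_distr_bigA (fun j (u : 'I_2) => (-1 : R) ^+ (u * w j)%N)) /=.
under eq_bigr => j _ do rewrite sum_sign_mul_bit.
have [->|/ffun_neq0[j nz_wj]] := eqVneq w 0.
  under eq_bigr => j _ do rewrite ffunE eqxx mulr1.
  by rewrite prodr_const card_ord mulr1.
by rewrite (bigD1 j) //= (negbTE nz_wj) mulr0 mul0r mulr0.
Qed.

Lemma walsh2E n (x y : bits2 n) : walsh2 x y = walsh x.1 y.1 * walsh x.2 y.2.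
Proof. by rewrite /walsh2 /dot2 signr_odd exprD. Qed.

Lemma walsh2D n (x y z : bits2 n) : walsh2 x (y + z) = walsh2 x y * walsh2 x z.
Proof. by rewrite !walsh2E /= !walshD; ring. Qed.

Lemma sum_walsh2 n (y : bits2 n) : \sum_x walsh2 x y = 4 ^+ n * (y == 0)%:R.
Proof.
under eq_bigr => x _ do rewrite walsh2E.
rewrite -(pair_big predT predT (fun a b => walsh a y.1 * walsh b y.2)) /=.
rewrite -big_distrlr /= !sum_walsh (_ : 4 = 2 * 2) ?exprMn -?natrM //.
case: y => [a b]; rewrite xpair_eqE.
by case: (a == 0); case: (b == 0); rewrite ?mulr1 ?mulr0 ?mul0r.
Qed.

End Walsh.

Lemma ler_sum_slice (R : numDomainType) (A B : finType) (F : A * B -> R) (a : A) :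
  (forall y, 0 <= F y) -> \sum_b F (a, b) <= \sum_y F y.
Proof.
move=> F_ge0; have -> : \sum_y F y = \sum_a' \sum_b F (a', b).
  by rewrite pair_bigA; apply: eq_bigr => -[].
rewrite [leRHS](bigD1 a) //= lerDl.
by apply: sumr_ge0 => a' _; apply: sumr_ge0 => b _.
Qed.

Lemma sum_Zslice_le (R : numDomainType) n (p : bits2 n -> R) : (forall y, 0 <= p y) ->
  \sum_(b1 : bits n) \sum_(b2 : bits n) p (0, b1) * p (0, b2) * p (0, b1 + b2) <=
  \sum_(y1 : bits2 n) \sum_(y2 : bits2 n) p y1 * p y2 * p (y1 + y2).
Proof.
move=> p_ge0; have p3_ge0 y1 y2 : 0 <= p y1 * p y2 * p (y1 + y2) by rewrite !mulr_ge0.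
apply: le_trans (ler_sum_slice 0 (fun y1 => sumr_ge0 _ (fun y2 _ => p3_ge0 y1 y2))).
apply: ler_sum => b1 _; apply: le_trans (ler_sum_slice 0 (p3_ge0 (0, b1))).
by apply: ler_sum => b2 _; rewrite (_ : (0, b1) + (0, b2) = (0 + 0, b1 + b2)) // addr0.
Qed.

Definition autocorr (R : pzSemiRingType) n (q : bits n -> R) (x : bits n) : R :=
  \sum_z q z * q (z + x).

Lemma sum_autocorr_cube_ge (R : numDomainType) n (q : bits n -> R) :
  (forall z, 0 <= q z) -> q 0 ^+ 6 <= \sum_x autocorr q x ^+ 3.
Proof.
move=> q_ge0; have autocorr_ge0 x : 0 <= autocorr q x by apply: sumr_ge0 => z _; rewrite mulr_ge0.
have autocorr0_ge : q 0 ^+ 2 <= autocorr q 0.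
  by rewrite /autocorr (bigD1 0) //= addr0 lerDl; apply: sumr_ge0 => z _; rewrite mulr_ge0.
rewrite (bigD1 0) //= -[leLHS]addr0 (_ : 6 = 2 * 3)%N // exprM; apply: lerD.
  by rewrite lerXn2r ?nnegrE ?exprn_ge0.
by apply: sumr_ge0 => x _; rewrite exprn_ge0.
Qed.

Section ZTypeWeyl.
Variables (C : numClosedFieldType) (n : nat).

Definition prob (psi : bits n -> C) (z : bits n) : C := `|psi z| ^+ 2.

Lemma prob_ge0 (psi : bits n -> C) (z : bits n) : 0 <= prob psi z.
Proof. exact: exprn_ge0. Qed.

Lemma PauliZ_exp_entry (k u v : 'I_2) :
  ((PauliX C ^+ 0) * (PauliZ C ^+ k)) u v = (u == v)%:R * (-1) ^+ (k * u)%N.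
Proof.
rewrite expr0 mul1r; case: k => [[|[|k]] ?] //=.
- by rewrite expr0 mxE mul0n expr0 mulr1.
- by rewrite expr1 mxE mul1n.
Qed.

Lemma weyl_Z (b z y : bits n) : weyl C (0, b) z y = (z == y)%:R * walsh C b z.
Proof.
rewrite /weyl /= /dotn big1 ?expr0 ?mul1r => [|j _]; last by rewrite ffunE.
under eq_bigr => j _ do rewrite ffunE PauliZ_exp_entry.
rewrite big_split /= -walshE; congr (_ * _).
have [<-|] := eqVneq z y; first by rewrite big1 // => j _; rewrite eqxx.
rewrite -subr_eq0 => /ffun_neq0[j]; rewrite !ffunE subr_eq0 => /negbTE nz_j.
by rewrite (bigD1 j) //= nz_j mul0r.
Qed.

Lemma expect_weyl_Z (psi : bits n -> C) (b : bits n) :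
  expect psi (weyl C (0, b)) = transform (@walsh C n) (prob psi) b.
Proof.
apply: eq_bigr => z _; under eq_bigr => y _ do rewrite weyl_Z.
rewrite (bigD1 z) //= big1 => [|y /negbTE]; last by rewrite eq_sym => ->; rewrite mul0r mulr0 mul0r.
by rewrite eqxx addr0 /prob normCK mul1r; ring.
Qed.

Lemma charDist_Z (psi : bits n -> C) (b : bits n) :
  charDist psi (0, b) = (2 ^+ n)^-1 * transform (@walsh C n) (prob psi) b ^+ 2.
Proof.
rewrite /charDist expect_weyl_Z real_normK //.
by apply: rpred_sum => z _; rewrite rpredM ?rpredX ?normr_real ?rpredN ?rpred1.
Qed.

Lemma transform_charDist_Z (psi : bits n -> C) (x : bits n) :
  transform (@walsh C n) (fun b => charDist psi (0, b)) x = autocorr (prob psi) x.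
Proof.
have two_n_neq0 : (2 : C) ^+ n != 0 by rewrite expf_neq0 ?pnatr_eq0.
rewrite {1}/transform.
under eq_bigr => b _ do rewrite charDist_Z expr2 walshC -!mulrA.
rewrite -mulr_sumr.
under eq_bigr => b _ do rewrite mulrA.
rewrite (sum_transformM (@walshD C n) (@sum_walsh C n)) mulKf //.
by apply: eq_bigr => z _; rewrite opp_bits.
Qed.

Lemma sum_charDist_Zslice (psi : bits n -> C) :
  2 ^+ n * \sum_(b1 : bits n) \sum_(b2 : bits n)
    charDist psi (0, b1) * charDist psi (0, b2) * charDist psi (0, b1 + b2) =
  \sum_x autocorr (prob psi) x ^+ 3.
Proof.
under [RHS]eq_bigr => x _ do rewrite -transform_charDist_Z.
rewrite (sum_transform_cube (@walshD C n) (@sum_walsh C n)).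
by congr (_ * _); apply: eq_bigr => b1 _; apply: eq_bigr => b2 _; rewrite opp_bits.
Qed.

End ZTypeWeyl.

Lemma sum_fourier_cube (C : numClosedFieldType) n (f : bits2 n -> C) :
  \sum_x fourier f x ^+ 3 = (4 ^+ n)^-1 ^+ 2 * \sum_y1 \sum_y2 f y1 * f y2 * f (y1 + y2).
Proof.
have four_n_neq0 : (4 : C) ^+ n != 0 by rewrite expf_neq0 ?pnatr_eq0.
under eq_bigr => x _ do rewrite exprMn.
rewrite -mulr_sumr (sum_transform_cube (@walsh2D C n) (@sum_walsh2 C n)).
rewrite exprSr -mulrA mulKf //; congr (_ * _).
by apply: eq_bigr => y1 _; apply: eq_bigr => y2 _; rewrite opp_bits2.
Qed.

Theorem claim3p4 (C : numClosedFieldType) (n : nat) (psi : {ffun bits n -> C})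
  (hpsi : is_state psi) :
  `|psi (zero_bits n)| ^+ 12 <=
  32 ^+ n * \sum_(x : bits2 n) (fourier (charDist psi) x) ^+ 3.
Proof.
have charDist_ge0 y : 0 <= charDist psi y.
  by rewrite mulr_ge0 ?invr_ge0 ?exprn_ge0 ?ler0n.
have -> : `|psi (zero_bits n)| ^+ 12 = prob psi 0 ^+ 6.
  by rewrite /prob -exprM (_ : zero_bits n = 0) //; apply/ffunP => j; rewrite !ffunE.
have scale : (32 : C) ^+ n * (4 ^+ n)^-1 ^+ 2 = 2 ^+ n.
  have four_n_neq0 : (4 : C) ^+ n != 0 by rewrite expf_neq0 ?pnatr_eq0.
  rewrite (_ : (32 : C) = 2 * 4 ^+ 2); last by rewrite -natrX -natrM.
  rewrite exprMn -exprM mulnC exprM.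
  by rewrite exprVn -mulrA mulfV ?mulr1 // expf_neq0.
rewrite sum_fourier_cube mulrA scale.
apply: le_trans (sum_autocorr_cube_ge (prob_ge0 psi)) _.
rewrite -sum_charDist_Zslice ler_wpM2l ?exprn_ge0 ?ler0n //.
exact: sum_Zslice_le charDist_ge0.
Qed.
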